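(* (1) Every centric hexagon $\mathcal H$ of $\hat{\mathcal X}$ with center $n_0$ is of the form $\mathcal H=S\setminus H_0$ (with the induced subgraph of $\hat\Gamma$), where $S\subseteq Q$ is such that $Q(S)$ is an $\mathbb F_2$-subgeometry of $Q$ isomorphic to $Q^+(3,2)$ and $n_0\in\langle S\rangle_{\mathbb F_2}$. (2) Every centric cube $C$ of $\hat{\mathcal X}$ with center $n_0$ is of the form $C=S\setminus H_0$, where $Q(S)$ is an $\mathbb F_2$-subgeometry of $Q$ isomorphic to $Q(4,2)$ and $n_0\in\langle S\rangle_{\mathbb F_2}$. (3) Every centric dodecade $D$ of $\hat{\mathcal X}$ with center $n_0$ is of the form $D=S\setminus H_0$, where $Q(S)$ is an $\mathbb F_2$-subgeometry of $Q$ isomorphic to $Q^-(5,2)$ and $n_0\in\langle S\rangle_{\mathbb F_2}$.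
   Context: Let $q=2^n$, $V=V(6,q)$, and let $Q=Q^-(5,q)$ be the set of singular points of a non-degenerate quadratic form $f$ of Witt index $2$ on $V$, a generalized quadrangle of order $(q,q^2)$ whose lines are the totally singular lines; $\perp$ is the polarity defined by the bilinear form of $f$. Let $H_0$ be a hyperplane with $Q_0:=Q\cap H_0\cong Q(4,q)$ parabolic, and $n_0:=H_0^\perp$ (so $H_0=n_0^\perp$). $\hat{\mathcal X}$ is the geometry with points $Q\setminus Q_0$ and lines $l\setminus\{l\cap Q_0\}$ for lines $l$ of $Q$ not in $Q_0$; $\hat\Gamma$ is its collinearity graph. For $k\ge3$, a centric $2k$-configuration of $\hat{\mathcal X}$ with center $n_0$ is a set of $2k$ points $\{x_i^a: i=1,\dots,k,\ a=1,2\}$ of $Q\setminus Q_0$ such that $x_i^a,x_j^b$ are adjacent in $\hat\Gamma$ iff $i\ne j$ and $a\ne b$, and each projective line through $x_i^1,x_i^2$ passes through $n_0$; it is a centric hexagon, cube, dodecade for $k=3,4,6$. For $S\subseteq\mathrm{PG}(V)$, there is a unique smallest subfield $\mathbb F_S$ of $\mathbb F_q$ such that $S$ is contained in a projective subgeometry of $\mathrm{PG}(V)$ defined over $\mathbb F_S$ (the set of points, in some subspace, admitting coordinates in $\mathbb F_S$ with respect to a suitable basis), and among such subgeometries there is a smallest one, denoted $\langle S\rangle_{\mathbb F_S}$. For $S\subseteq Q$, $Q(S)$ is the point-line geometry with point set $S$ and lines the sets $l\cap S$, $l$ a line of $Q$ with $|l\cap S|\ge2$; $Q(S)$ is an $\mathbb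 F_2$-subgeometry if $\mathbb F_S=\mathbb F_2$. $Q^+(3,2)$, $Q(4,2)$, $Q^-(5,2)$ denote the classical generalized quadrangles of orders $(2,1)$, $(2,2)$, $(2,4)$. *)

From HB Require Import structures.
From mathcomp Require Import all_boot all_order all_algebra all_field.
Set Implicit Arguments. Unset Strict Implicit. Unset Printing Implicit Defensive.
Import GRing.Theory.
Local Open Scope ring_scope.

Section Defs.
Variable F : finFieldType.

Definition qf (C : 'M[F]_6) (v : 'rV[F]_6) : F := (v *m C *m v^T) 0 0.
(* Its polar (associated bilinear) form b(u,v) = f(u+v) - f(u) - f(v). *)
Definition bf (C : 'M[F]_6) (u v : 'rV[F]_6) : F := (u *m (C + C^T) *m v^T) 0 0.

Definition qf_nondeg (C : 'M[F]_6) : Prop :=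
  forall x, (forall y, bf C x y = 0) -> qf C x = 0 -> x = 0.

Definition totsing (C : 'M[F]_6) m (W : 'M[F]_(m, 6)) : bool :=
  [forall v : 'rV[F]_6, (v <= W)%MS ==> (qf C v == 0)].

Definition witt_index2 (C : 'M[F]_6) : Prop :=
  (exists W : 'M[F]_6, totsing C W /\ \rank W = 2%N) /\
  (forall W : 'M[F]_6, totsing C W -> (\rank W <= 2)%N).

Definition perpmx (C : 'M[F]_6) m (W : 'M[F]_(m, 6)) : 'M[F]_6 :=
  kermx ((C + C^T) *m W^T).

(* The restriction of f to the hyperplane H is non-degenerate, i.e.
   Q /\ H is a non-degenerate (= parabolic) quadric of PG(H). *)
Definition parabolic_section (C : 'M[F]_6) (H : 'M[F]_6) : Prop :=
  forall x, (x <= H)%MS -> (forall y, (y <= H)%MS -> bf C x y = 0) ->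
    qf C x = 0 -> x = 0.

(* Points of PG(V): 1-dimensional subspaces, in canonical form. *)
Definition is_ppoint (A : 'M[F]_6) : bool := (\rank A == 1)%N && (genmx A == A).
Definition ppoint := {A : 'M[F]_6 | is_ppoint A}.

Definition qpoint (C : 'M[F]_6) (p : ppoint) : bool := totsing C (val p).
Definition qline (C : 'M[F]_6) (L : 'M[F]_6) : bool := totsing C L && (\rank L == 2)%N.
(* Adjacency in the collinearity graph of hat X (for points of Q \ H0):
   distinct and spanning a totally singular line. *)
Definition adj (C : 'M[F]_6) (p q : ppoint) : bool :=
  (p != q) && totsing C (val p + val q)%MS.

Definition QS_line (C : 'M[F]_6) (S T : {set ppoint}) : Prop :=
  exists L : 'M[F]_6, qline C L /\ T = [set p in S | (val p <= L)%MS] /\ (2 <= #|T|)%N.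

(* The projective subgeometry over F_2 determined by the basis e of a subspace. *)
Definition F2pts m (e : 'M[F]_(m, 6)) : {set ppoint} :=
  [set p : ppoint | [exists c : 'rV[F]_m,
     [&& c != 0, [forall j, (c 0 j == 0) || (c 0 j == 1)] & val p == <<c *m e>>%MS]]].
Definition is_F2_subgeom (G : {set ppoint}) : Prop :=
  exists m (e : 'M[F]_(m, 6)), row_free e /\ G = F2pts e.

(* F_S = F_2: S lies in some F_2-subgeometry. *)
Definition F2_subgeometry (S : {set ppoint}) : Prop :=
  exists G, is_F2_subgeom G /\ S \subset G.
Definition in_F2_span (p : ppoint) (S : {set ppoint}) : Prop :=
  forall G, is_F2_subgeom G -> S \subset G -> p \in G.

Definition centric (C H0 : 'M[F]_6) (n0 : ppoint) k (x : 'I_k -> 'I_2 -> ppoint) : Prop :=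
  [/\ (forall i a j b, x i a = x j b -> i = j /\ a = b),
      (forall i a, qpoint C (x i a) /\ ~~ (val (x i a) <= H0)%MS),
      (forall i a j b, adj C (x i a) (x j b) = (i != j) && (a != b)) &
      (forall i, (val n0 <= val (x i ord0) + val (x i ord_max))%MS)].

End Defs.

Definition model_pts n (qm : 'rV['F_2]_n -> 'F_2) : {set 'rV['F_2]_n} :=
  [set v | (v != 0) && (qm v == 0)].
Definition model_line n (qm : 'rV['F_2]_n -> 'F_2) (T : {set 'rV['F_2]_n}) : Prop :=
  exists u v, (u != 0) /\ (v != 0) /\ (u != v) /\ qm u = 0 /\ qm v = 0 /\
    qm (u + v) = 0 /\ T = [set u; v; u + v].

Definition qplus3 (v : 'rV['F_2]_4) : 'F_2 :=
  v ord0 (inord 0) * v ord0 (inord 1) + v ord0 (inord 2) * v ord0 (inord 3).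
Definition qpar4 (v : 'rV['F_2]_5) : 'F_2 :=
  v ord0 (inord 0) * v ord0 (inord 1) + v ord0 (inord 2) * v ord0 (inord 3)
  + v ord0 (inord 4) ^+ 2.
Definition qminus5 (v : 'rV['F_2]_6) : 'F_2 :=
  v ord0 (inord 0) * v ord0 (inord 1) + v ord0 (inord 2) * v ord0 (inord 3)
  + v ord0 (inord 4) ^+ 2 + v ord0 (inord 4) * v ord0 (inord 5) + v ord0 (inord 5) ^+ 2.

Definition iso_to_model (F : finFieldType) (C : 'M[F]_6) (S : {set ppoint F})
    n (qm : 'rV['F_2]_n -> 'F_2) : Prop :=
  exists phi : ppoint F -> 'rV['F_2]_n,
    [/\ {in S &, injective phi}, phi @: S = model_pts qm &
        forall T : {set ppoint F}, T \subset S ->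
          (QS_line C S T <-> model_line qm (phi @: T))].

Definition of_form (F : finFieldType) (C H0 : 'M[F]_6) (n0 : ppoint F) k
    (x : 'I_k -> 'I_2 -> ppoint F) n (qm : 'rV['F_2]_n -> 'F_2) : Prop :=
  exists S : {set ppoint F},
    [/\ S \subset [set p | qpoint C p], F2_subgeometry S, iso_to_model C S qm,
        in_F2_span n0 S &
        [set x i a | i : 'I_k, a : 'I_2] = [set p in S | ~~ (val p <= H0)%MS]].

(* After rescaling, a centric 2k-configuration consists of the points <u_i> and <n + u_i>,
   where <n> = n_0, f(u_i) = 0, f(n) = c != 0, and b(u_i, n) = b(u_i, u_j) = c for i != j.
   So the F_2-span of n, u_0, u_1, ... carries c times a quadratic form over F_2 fixed by these
   Gram data alone.  The F_2-frame u_0, u_1, n + u_2, n + u_0 + u_1, followed by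
   n + u_0 + u_1 + u_2 + u_3 when k >= 4 and by n + u_0 + u_1 + u_2 + u_4 when k = 6, turns it into
   the model form of Q^+(3,2), Q(4,2) or Q^-(5,2); for k = 6, non-degeneracy of f forces
   u_5 = n + u_0 + ... + u_4.
   The singular points S of this F_2-subgeometry are the required set: a finite check in the
   model shows that the points of S outside n_0^perp = H_0 are exactly the 2k points of the
   configuration, and n is the sum of the free ends of a quadrangle of S, which forces n_0 into
   every F_2-subgeometry containing S. *)

From HB Require Import structures.
From mathcomp Require Import all_boot all_order all_algebra all_field.
From mathcomp Require Import ring zify.
Import GRing.Theory.
Local Open Scope ring_scope.
Set Implicit Arguments. Unset Strict Implicit. Unset Printing Implicit Defensive.

Lemma mulrn_odd (V : zmodType) (x : V) k : x + x = 0 -> x *+ k = x *+ odd k.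
Proof.
move=> xx0; rewrite -{1}(odd_double_half k) mulrnDr -mul2n mulrnA mulr2n xx0.
by rewrite mul0rn addr0.
Qed.

Section QuadraticForm.
Variable F : finFieldType.
Hypothesis F2 : 2%N \in [pchar F].
Variable C : 'M[F]_6.
Implicit Types (u v w : 'rV[F]_6) (a b : F).

Lemma addvv_pchar2 m (v : 'rV[F]_m) : v + v = 0.
Proof. by rewrite -[v]scale1r -scalerDl addrr_pchar2 // scale0r. Qed.

Lemma oppv_pchar2 m (v : 'rV[F]_m) : - v = v.
Proof. by apply/esym/eqP; rewrite -addr_eq0 addvv_pchar2. Qed.

Lemma mx11_entry_tr (A : 'M[F]_1) : A^T 0 0 = A 0 0.
Proof. by rewrite mxE. Qed.

Lemma mx11D (A B : 'M[F]_1) : (A + B) 0 0 = A 0 0 + B 0 0.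
Proof. by rewrite mxE. Qed.

Lemma mx11Z a (A : 'M[F]_1) : (a *: A) 0 0 = a * A 0 0.
Proof. by rewrite mxE. Qed.

Lemma bfC u v : bf C u v = bf C v u.
Proof.
rewrite /bf -[LHS]mx11_entry_tr !trmx_mul !trmxK linearD /= trmxK.
by rewrite [C^T + C]addrC mulmxA.
Qed.

Lemma bfDl u v w : bf C (u + v) w = bf C u w + bf C v w.
Proof. by rewrite /bf !mulmxDl mx11D. Qed.

Lemma bfDr u v w : bf C w (u + v) = bf C w u + bf C w v.
Proof. by rewrite bfC bfDl !(bfC _ w). Qed.

Lemma bfZl a u w : bf C (a *: u) w = a * bf C u w.
Proof. by rewrite /bf -!scalemxAl mx11Z. Qed.

Lemma bfZr a u w : bf C w (a *: u) = a * bf C w u.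
Proof. by rewrite bfC bfZl bfC. Qed.

Lemma bf0l u : bf C 0 u = 0.
Proof. by rewrite -(scale0r 0) bfZl mul0r. Qed.

Lemma qf0 : qf C 0 = 0.
Proof. by rewrite /qf !mul0mx mxE. Qed.

Lemma qfZ a u : qf C (a *: u) = a ^+ 2 * qf C u.
Proof.
rewrite /qf linearZ /= -scalemxAl -scalemxAr !mx11Z.
by rewrite -scalemxAl mx11Z mulrA expr2.
Qed.

Lemma qfD u v : qf C (u + v) = qf C u + qf C v + bf C u v.
Proof.
rewrite /qf /bf linearD /= !mulmxDl !mulmxDr !mx11D.
have -> : (v *m C *m u^T) 0 0 = (u *m C^T *m v^T) 0 0.
  by rewrite -[LHS]mx11_entry_tr !trmx_mul !trmxK mulmxA.
by rewrite mulmxDl mx11D; ring.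
Qed.

Lemma bf_alt u : bf C u u = 0.
Proof.
have := qfD u u; rewrite addvv_pchar2 qf0 addrr_pchar2 // add0r.
by move=> <-.
Qed.

Lemma bf_suml I (r : seq I) (g : I -> 'rV[F]_6) w :
  bf C (\sum_(i <- r) g i) w = \sum_(i <- r) bf C (g i) w.
Proof. by apply: (big_morph (bf C ^~ w)); [move=> *; rewrite bfDl | rewrite bf0l]. Qed.

Lemma qf_sum m (b : nat -> F) (f : nat -> 'rV[F]_6) :
  qf C (\sum_(j < m) b j *: f j) =
  \sum_(j < m) (b j ^+ 2 * qf C (f j) + \sum_(i < j) b i * b j * bf C (f i) (f j)).
Proof.
elim: m => [|m IH]; first by rewrite !big_ord0 qf0.
rewrite !big_ord_recr /= qfD IH qfZ -addrA bf_suml; congr (_ + (_ + _)).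
by apply: eq_bigr => i _; rewrite bfZl bfZr mulrA.
Qed.

End QuadraticForm.

Section Points.
Variable F : finFieldType.
Variable C : 'M[F]_6.
Implicit Types (u v : 'rV[F]_6) (p : ppoint F).

Lemma is_ppoint_genmx v : v != 0 -> is_ppoint <<v>>%MS.
Proof.
move=> nz_v; rewrite /is_ppoint genmx_id eqxx andbT.
by rewrite genmxE rank_rV nz_v.
Qed.

Definition ppoint_of v (nz_v : v != 0) : ppoint F :=
  exist (fun A => is_ppoint A) _ (is_ppoint_genmx nz_v).

Lemma ppoint_vec p : exists v, (v != 0) && (val p == <<v>>%MS).
Proof.
case: p => A /= /andP[/eqP rA /eqP gA].
have [i nz_i | all0] := pickP (fun i => row i A != 0).
  have /eqmxP rowE : (row i A == A)%MS.
    by rewrite -(mxrank_leqif_eq (row_sub i A)) rA rank_rV nz_i.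
  by exists (row i A); rewrite nz_i /= -{1}gA (eq_genmx rowE).
suff A0 : A = 0 by move: rA; rewrite A0 mxrank0.
by apply/row_matrixP => i; rewrite row0; apply/eqP/negbFE/all0.
Qed.

Definition pvec p : 'rV[F]_6 := xchoose (ppoint_vec p).

Lemma pvecP p : pvec p != 0 /\ val p = <<pvec p>>%MS.
Proof. by have /andP[-> /eqP] := xchooseP (ppoint_vec p). Qed.

Lemma mul_mx11 (a : 'M[F]_1) m (v : 'rV[F]_m) : a *m v = a 0 0 *: v.
Proof. by rewrite {1}[a]mx11_scalar mul_scalar_mx. Qed.

Lemma eq_genmx_rV u v : v != 0 -> <<u>>%MS = <<v>>%MS <-> exists2 a, a != 0 & u = a *: v.
Proof.
move=> nz_v; split => [/genmxP/andP[/sub_rVP[a ->] svu] | [a nz_a ->]].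
  exists a => //; apply: contraNneq nz_v => a0.
  by move: svu; rewrite a0 scale0r => /submx0null/eqP.
exact: eq_genmx (eqmx_scale _ nz_a).
Qed.

Lemma totsing_genmx v : totsing C <<v>>%MS = (qf C v == 0).
Proof.
apply/forallP/eqP => [sing | qv w]; first by have := sing v; rewrite genmxE submx_refl => /eqP.
by apply/implyP; rewrite genmxE => /sub_rVP[a ->]; rewrite qfZ qv mulr0.
Qed.

Lemma totsing_genmx2 u v : qf C u = 0 -> qf C v = 0 ->
  totsing C (<<u>> + <<v>>)%MS = (bf C u v == 0).
Proof.
move=> qu qv; have subE w : (w <= <<u>> + <<v>>)%MS = (w <= u + v)%MS.
  by rewrite (adds_eqmx (genmxE u) (genmxE v)).
apply/forallP/eqP => [sing | buv w].
  by have := sing (u + v); rewrite subE addmx_sub_adds ?submx_refl //= qfD qu qv !add0r => /eqP.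
apply/implyP; rewrite subE => /sub_addsmxP[[a b] /= ->].
by rewrite !mul_mx11 qfD !qfZ bfZl bfZr qu qv buv !mulr0 !addr0.
Qed.

End Points.

Section NormalForm.
Variable F : finFieldType.
Hypothesis F2 : 2%N \in [pchar F].
Variables (C H0 : 'M[F]_6) (n0 : ppoint F).
Hypothesis rank_H0 : \rank H0 = 5%N.
Hypothesis n0_perp : (val n0 == perpmx C H0)%MS.

Lemma sub_H0_bf n : val n0 = <<n>>%MS -> (exists y, bf C y n != 0) ->
  forall v, (v <= H0)%MS = (bf C v n == 0).
Proof.
move=> n0E [y ny] v; set B := C + C^T.
have n_ker : n *m (B *m H0^T) = 0.
  apply/sub_kermxP; apply: submx_trans (_ : (n <= val n0)%MS) _.
    by rewrite n0E genmxE.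
  by case/andP: n0_perp.
have H0_ker : (H0 <= kermx (B *m n^T))%MS.
  apply/sub_kermxP; apply: trmx_inj; rewrite !trmx_mul trmxK trmx0 linearD /= trmxK.
  by rewrite addrC -mulmxA.
have rank_Bn : \rank (B *m n^T) = 1%N.
  apply/eqP; rewrite eqn_leq rank_leq_col lt0n mxrank_eq0.
  by apply: contraNneq ny => Bn0; rewrite /bf -mulmxA Bn0 mulmx0 mxE.
have /eqmxP H0E : (H0 == kermx (B *m n^T))%MS.
  by rewrite -(mxrank_leqif_eq H0_ker) rank_H0 mxrank_ker rank_Bn.
rewrite H0E sub_kermx mulmxA /bf -/B; apply/eqP/eqP => [-> | bv0]; first by rewrite mxE.
by apply/rowP => i; rewrite !ord1 bv0 mxE.
Qed.

Lemma centric_pair_sum k (x : 'I_k -> 'I_2 -> ppoint F) : (0 < k)%N -> centric C H0 n0 x ->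
  exists n (U W : 'I_k -> 'rV[F]_6),
   [/\ val n0 = <<n>>%MS, forall v, (v <= H0)%MS = (bf C v n == 0) &
       forall i, [/\ val (x i ord0) = <<U i>>%MS, val (x i ord_max) = <<W i>>%MS & n = U i + W i]].
Proof.
move=> k_gt0 [x_inj x_pt x_adj n0_sub]; pose i0 := Ordinal k_gt0.
have [nz_n n0E] := pvecP n0; set n := pvec n0 in nz_n n0E.
pose U i := pvec (x i ord0); pose W i := pvec (x i ord_max).
have UE i : val (x i ord0) = <<U i>>%MS by case: (pvecP (x i ord0)).
have WE i : val (x i ord_max) = <<W i>>%MS by case: (pvecP (x i ord_max)).
have qU i : qf C (U i) = 0 by have [] := x_pt i ord0; rewrite /qpoint UE totsing_genmx => /eqP.
have qW i : qf C (W i) = 0 by have [] := x_pt i ord_max; rewrite /qpoint WE totsing_genmx => /eqP.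
have /fin_all_exists[al /fin_all_exists[be nE]] : forall i, exists al be, n = al *: U i + be *: W i.
  move=> i; have : (n <= U i + W i)%MS.
    rewrite -(adds_eqmx (genmxE (U i)) (genmxE (W i))) -UE -WE.
    by apply: submx_trans (n0_sub i); rewrite n0E genmxE.
  by case/sub_addsmxP => [[a b] /= ->]; exists (a 0 0), (b 0 0); rewrite !mul_mx11.
have bUn i : bf C (U i) n = be i * bf C (U i) (W i).
  by rewrite {1}(nE i) bfDr !bfZr bf_alt // mulr0 add0r.
have bWn i : bf C (W i) n = al i * bf C (U i) (W i).
  by rewrite {1}(nE i) bfDr !bfZr bf_alt // mulr0 addr0 bfC.
have perp : forall v, (v <= H0)%MS = (bf C v n == 0).
  have nz_UW : bf C (U i0) (W i0) != 0.
    have := x_adj i0 ord0 i0 ord_max; rewrite eqxx /= /adj.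
    have -> : x i0 ord0 != x i0 ord_max by apply/eqP => /x_inj[_].
    by rewrite /= UE WE totsing_genmx2 // => ->.
  apply: (sub_H0_bf n0E).
  have [al0 | nz_al] := eqVneq (al i0) 0; last by exists (W i0); rewrite bWn mulf_neq0.
  exists (U i0); rewrite bUn mulf_neq0 //.
  by apply: contraNneq nz_n => be0; rewrite (nE i0) al0 be0 !scale0r addr0.
have nz_be i : be i != 0.
  by have := (x_pt i ord0).2; rewrite UE genmxE perp bUn; apply: contraNneq => ->; rewrite mul0r.
have nz_al i : al i != 0.
  by have := (x_pt i ord_max).2; rewrite WE genmxE perp bWn; apply: contraNneq => ->; rewrite mul0r.
exists n, (fun i => al i *: U i), (fun i => be i *: W i); split => // i; split => //.
  by rewrite UE; apply/eq_genmx/eqmx_sym/eqmx_scale.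
by rewrite WE; apply/eq_genmx/eqmx_sym/eqmx_scale.
Qed.

Lemma centric_normal_form k (x : 'I_k -> 'I_2 -> ppoint F) : (0 < k)%N -> centric C H0 n0 x ->
  exists c n (u : 'I_k -> 'rV[F]_6),
   [/\ c != 0, val n0 = <<n>>%MS & forall v, (v <= H0)%MS = (bf C v n == 0)] /\
   [/\ qf C n = c, forall i, qf C (u i) = 0, forall i, bf C (u i) n = c &
       forall i j, i != j -> bf C (u i) (u j) = c] /\
   (forall i, val (x i ord0) = <<u i>>%MS /\ val (x i ord_max) = <<n + u i>>%MS).
Proof.
move=> k_gt0 x_c; have [n [U [W [n0E perp UWE]]]] := centric_pair_sum k_gt0 x_c.
have [_ x_pt x_adj _] := x_c.
have qU i : qf C (U i) = 0.
  by have [xE _ _] := UWE i; have [] := x_pt i ord0; rewrite /qpoint xE totsing_genmx => /eqP.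
have qW i : qf C (W i) = 0.
  by have [_ xE _] := UWE i; have [] := x_pt i ord_max; rewrite /qpoint xE totsing_genmx => /eqP.
have bUn i : bf C (U i) n = qf C n.
  by have [_ _ ->] := UWE i; rewrite bfDr bf_alt // qfD qU qW !add0r.
have bUW i j : i != j -> bf C (U i) (W j) = 0.
  move=> neq_ij; have := x_adj i ord0 j ord_max; rewrite neq_ij /adj.
  have [-> _ _] := UWE i; have [_ -> _] := UWE j.
  by rewrite totsing_genmx2 // andbC => /andP[/eqP].
have UE i : U i = n + W i by have [_ _ ->] := UWE i; rewrite -addrA addvv_pchar2 // addr0.
have WE i : W i = n + U i by have [_ _ ->] := UWE i; rewrite addrAC addvv_pchar2 // add0r.
exists (qf C n), n, U; split; [split => // | split; [split => // | ]].
- pose i0 := Ordinal k_gt0; rewrite -(bUn i0) -perp -genmxE.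
  by have [<- _ _] := UWE i0; case: (x_pt i0 ord0).
- by move=> i j neq_ij; rewrite (UE j) bfDr bUn bUW // addr0.
- by move=> i; have [-> -> _] := UWE i; rewrite WE.
Qed.

End NormalForm.

Section F2Span.
Variable F : finFieldType.
Hypothesis F2 : 2%N \in [pchar F].

Definition bits01 m (a : 'rV[F]_m) := forall j, a 0 j = 0 \/ a 0 j = 1.

Lemma rV_neq_entry m (a b : 'rV[F]_m) : a != b -> exists j, a 0 j != b 0 j.
Proof.
move=> neq_ab; have [j | eq_ab] := pickP (fun j => a 0 j != b 0 j); first by exists j.
by case/eqP: neq_ab; apply/rowP => j; apply/eqP/negbFE/eq_ab.
Qed.

Lemma bits01_neq0 m (a : 'rV[F]_m) : a != 0 -> bits01 a -> exists j, a 0 j = 1.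
Proof.
move=> /rV_neq_entry[j nz_j] a01; exists j; move: nz_j; rewrite mxE.
by case: (a01 j) => ->; rewrite ?eqxx.
Qed.

Lemma eq_scalar_bits m (l mu nu : F) (A B D : 'I_m -> F) j1 j2 :
  (forall j, l * A j + mu * B j = nu * D j) ->
  (forall j, A j = 0 \/ A j = 1) -> (forall j, D j = 0 \/ D j = 1) ->
  l != 0 -> mu != 0 -> A j1 = 1 -> B j1 = 0 -> B j2 = 1 -> l = mu.
Proof.
move=> eqj A01 D01 nz_l nz_mu A1 B1 B2.
have nu_l : nu = l.
  have := eqj j1; rewrite A1 B1 mulr1 mulr0 addr0.
  by case: (D01 j1) => ->; rewrite ?mulr1 // mulr0 => l0; rewrite l0 eqxx in nz_l.
have := eqj j2; rewrite B2 nu_l mulr1.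
case: (A01 j2) => ->; case: (D01 j2) => ->; rewrite ?mulr0 ?mulr1 ?add0r //.
- by move=> mu0; rewrite mu0 eqxx in nz_mu.
- by move/eqP; rewrite addr_eq0 oppr_pchar2 // => /eqP.
- by move/(canRL (addKr l)); rewrite addNr => mu0; rewrite mu0 eqxx in nz_mu.
Qed.

Variables (m : nat) (f : 'M[F]_(m, 6)).
Hypothesis free_f : row_free f.

Lemma collinear_bits_scalar (a b d : 'rV[F]_m) (l mu nu : F) :
  a != 0 -> b != 0 -> bits01 a -> bits01 b -> bits01 d -> a != b -> l != 0 -> mu != 0 ->
  l *: (a *m f) + mu *: (b *m f) = nu *: (d *m f) -> l = mu.
Proof.
move=> nz_a nz_b a01 b01 d01 neq_ab nz_l nz_mu.
rewrite !scalemxAl -mulmxDl => /(row_free_inj free_f) eqf.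
have eqj j : l * a 0 j + mu * b 0 j = nu * d 0 j.
  by have := congr1 (fun M : 'rV[F]_m => M 0 j) eqf; rewrite !mxE.
have [j neq_j] := rV_neq_entry neq_ab.
have [ja a_ja] := bits01_neq0 nz_a a01; have [jb b_jb] := bits01_neq0 nz_b b01.
case: (a01 j) neq_j => a_j; case: (b01 j) => b_j; rewrite a_j b_j ?eqxx // => _.
  symmetry; apply: (@eq_scalar_bits _ mu l nu (fun j => b 0 j) (fun j => a 0 j) (fun j => d 0 j) j ja) => //.
  by move=> i; rewrite addrC.
exact: (@eq_scalar_bits _ l mu nu (fun j => a 0 j) (fun j => b 0 j) (fun j => d 0 j) j jb).
Qed.

Definition F2comb (v : 'rV[F]_6) :=
  exists a, [/\ a != 0, bits01 a & <<v>>%MS = <<a *m f>>%MS].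

Lemma F2comb_scaled v : v != 0 -> F2comb v ->
  exists a l, [/\ a != 0, bits01 a, l != 0 & v = l *: (a *m f)].
Proof.
move=> nz_v [a [nz_a a01 vE]].
have nz_af : a *m f != 0.
  by apply: contraNneq nz_a => af0; apply/eqP/(row_free_inj free_f); rewrite af0 mul0mx.
by have [l nz_l ->] := (eq_genmx_rV _ nz_af).1 vE; exists a, l.
Qed.

(* On a line of the subgeometry the three normalised representatives share their scalar. *)
Lemma F2comb_add_scalar X Y a b l mu :
  a != 0 -> bits01 a -> l != 0 -> X = l *: (a *m f) ->
  b != 0 -> bits01 b -> mu != 0 -> Y = mu *: (b *m f) ->
  <<X>>%MS != <<Y>>%MS -> F2comb (X + Y) -> l = mu.
Proof.
move=> nz_a a01 nz_l XE nz_b b01 nz_mu YE neq_XY XY_comb.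
have nz_XY : X + Y != 0.
  by apply: contraNneq neq_XY => /eqP; rewrite addr_eq0 oppv_pchar2 // => /eqP ->.
have [d [nu [nz_d d01 nz_nu XYE]]] := F2comb_scaled nz_XY XY_comb.
have eqXY : l *: (a *m f) + mu *: (b *m f) = nu *: (d *m f) by rewrite -XE -YE.
apply: (collinear_bits_scalar nz_a nz_b a01 b01 d01 _ nz_l nz_mu eqXY).
apply: contraNneq neq_XY => ab; rewrite XE YE ab.
by rewrite (eq_genmx (eqmx_scale _ nz_l)) (eq_genmx (eqmx_scale _ nz_mu)).
Qed.

Lemma F2comb_quadrangle X0 Y1 X2 Y0 :
  X0 != 0 -> Y1 != 0 -> X2 != 0 -> Y0 != 0 -> X0 + Y0 != 0 ->
  <<X0>>%MS != <<Y1>>%MS -> <<Y1>>%MS != <<X2>>%MS -> <<X2>>%MS != <<Y0>>%MS ->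
  F2comb X0 -> F2comb Y1 -> F2comb X2 -> F2comb Y0 ->
  F2comb (X0 + Y1) -> F2comb (Y1 + X2) -> F2comb (X2 + Y0) -> F2comb (X0 + Y0).
Proof.
move=> nz0 nz1 nz2 nz3 nz03 neq01 neq12 neq23 c0 c1 c2 c3 c01 c12 c23.
have [a0 [l0 [nz_a0 a0b nz_l0 X0E]]] := F2comb_scaled nz0 c0.
have [a1 [l1 [nz_a1 a1b nz_l1 Y1E]]] := F2comb_scaled nz1 c1.
have [a2 [l2 [nz_a2 a2b nz_l2 X2E]]] := F2comb_scaled nz2 c2.
have [a3 [l3 [nz_a3 a3b nz_l3 Y0E]]] := F2comb_scaled nz3 c3.
have l01 := F2comb_add_scalar nz_a0 a0b nz_l0 X0E nz_a1 a1b nz_l1 Y1E neq01 c01.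
have l12 := F2comb_add_scalar nz_a1 a1b nz_l1 Y1E nz_a2 a2b nz_l2 X2E neq12 c12.
have l23 := F2comb_add_scalar nz_a2 a2b nz_l2 X2E nz_a3 a3b nz_l3 Y0E neq23 c23.
have sumE : X0 + Y0 = l0 *: ((a0 + a3) *m f).
  by rewrite X0E Y0E -l23 -l12 -l01 mulmxDl scalerDr.
exists (a0 + a3); split.
- by apply: contraNneq nz03 => a03; rewrite sumE a03 mul0mx scaler0.
- move=> j; rewrite mxE; case: (a0b j) => ->; case: (a3b j) => ->;
    rewrite ?add0r ?addr0 ?addrr_pchar2 //; by [left | right].
- by rewrite sumE (eq_genmx (eqmx_scale _ nz_l0)).
Qed.

End F2Span.

Lemma F2pts_F2comb (F : finFieldType) m (f : 'M[F]_(m, 6)) p v :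
  p \in F2pts f -> val p = <<v>>%MS -> F2comb f v.
Proof.
rewrite inE => /existsP[a /and3P[nz_a /forallP a01 /eqP pE]] vE.
exists a; split => //; last by rewrite -vE.
by move=> j; case/orP: (a01 j) => /eqP ->; [left | right].
Qed.

Lemma ppoint_rV_neq0 (F : finFieldType) (p : ppoint F) (v : 'rV[F]_6) : val p = <<v>>%MS -> v != 0.
Proof.
case: p => A /= /andP[/eqP rA _] AE; apply/eqP => v0.
by move: rA; rewrite AE v0 genmx0 mxrank0.
Qed.

Lemma in_F2_span_quadrangle (F : finFieldType) (F2 : 2%N \in [pchar F])
    (S : {set ppoint F}) (n0 : ppoint F) (X0 Y1 X2 Y0 : 'rV[F]_6) :
  <<X0>>%MS != <<Y1>>%MS -> <<Y1>>%MS != <<X2>>%MS -> <<X2>>%MS != <<Y0>>%MS ->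
  (forall v, v \in [:: X0; Y1; X2; Y0; X0 + Y1; Y1 + X2; X2 + Y0] ->
     exists2 p, p \in S & val p = <<v>>%MS) ->
  val n0 = <<X0 + Y0>>%MS -> in_F2_span n0 S.
Proof.
move=> neq01 neq12 neq23 inS n0E G [m [f [free_f ->]]] sub_SG.
have comb v : v \in [:: X0; Y1; X2; Y0; X0 + Y1; Y1 + X2; X2 + Y0] -> F2comb f v.
  by case/inS => p pS pE; apply: F2pts_F2comb (subsetP sub_SG p pS) pE.
have nz v : v \in [:: X0; Y1; X2; Y0; X0 + Y1; Y1 + X2; X2 + Y0] -> v != 0.
  by case/inS => p _ /ppoint_rV_neq0.
have [a [nz_a a01 aE]] : F2comb f (X0 + Y0).
  apply: (F2comb_quadrangle F2 free_f _ _ _ _ (ppoint_rV_neq0 n0E) neq01 neq12 neq23);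
    by (apply: nz || apply: comb); rewrite !inE eqxx ?orbT.
rewrite inE; apply/existsP; exists a; rewrite nz_a n0E aE eqxx andbT /=.
by apply/forallP => j; case: (a01 j) => ->; rewrite eqxx ?orbT.
Qed.

Lemma F2_cases (x : 'F_2) : x = 0 \/ x = 1.
Proof. by case: x => [[|[|//]] lt_x2]; [left | right]; apply/val_inj. Qed.

Lemma pchar2_F2 : 2%N \in [pchar 'F_2].
Proof. exact: pchar_Fp. Qed.

Lemma F2_sub_rV_eq m (a b : 'rV['F_2]_m) : a != 0 -> (a <= b)%MS -> a = b.
Proof.
move=> nz_a /sub_rVP[mu aE]; move: nz_a; rewrite aE.
by case: (F2_cases mu) => ->; rewrite ?scale0r ?eqxx // scale1r.
Qed.

Definition row_seq m (s : seq 'F_2) : 'rV['F_2]_m := \row_j nth 0 s j.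

Lemma F2_add_neq0 m (a b : 'rV['F_2]_m) : a != b -> a + b != 0.
Proof. by apply: contraNneq => /eqP; rewrite addr_eq0 oppv_pchar2 ?pchar2_F2 // => /eqP. Qed.

Section Char2Field.
Variable F : finFieldType.
Hypothesis F2 : 2%N \in [pchar F].

Definition embF2 (x : 'F_2) : F := (x : nat)%:R.

Lemma embF2_is_nmod_morphism : nmod_morphism embF2.
Proof.
split=> // [[[|[|//]] ?] [[|[|//]] ?]]; rewrite /embF2 /= ?add0r ?addr0 //.
by rewrite -[1 + 1]/(2%:R) (pcharf0 F2).
Qed.

Lemma embF2_is_monoid_morphism : monoid_morphism embF2.
Proof. by split=> // [[[|[|//]] ?] [[|[|//]] ?]]; rewrite /embF2 /= ?mul0r ?mulr0 ?mulr1. Qed.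

HB.instance Definition _ := GRing.isNmodMorphism.Build _ _ embF2 embF2_is_nmod_morphism.
HB.instance Definition _ := GRing.isMonoidMorphism.Build _ _ embF2 embF2_is_monoid_morphism.

Lemma embF2_01 x : embF2 x = 0 \/ embF2 x = 1.
Proof. by case: (F2_cases x) => ->; [left; exact: rmorph0 | right; exact: rmorph1]. Qed.

Definition F2lift m (a : 'rV['F_2]_m) : 'rV[F]_m := map_mx embF2 a.

Lemma F2lift_eq0 m (a : 'rV['F_2]_m) : (F2lift a == 0) = (a == 0).
Proof. exact: map_mx_eq0. Qed.

Lemma F2liftD m (a b : 'rV['F_2]_m) : F2lift (a + b) = F2lift a + F2lift b.
Proof. exact: map_mxD. Qed.

Section FrameSubgeometry.
Variable C : 'M[F]_6.
Variables (m : nat) (e : 'M[F]_(m, 6)) (qm : 'rV['F_2]_m -> 'F_2) (c : F).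
Hypotheses (free_e : row_free e) (nz_c : c != 0).
Hypothesis qf_e : forall a, qf C (F2lift a *m e) = c * embF2 (qm a).

Local Notation vec a := (F2lift a *m e).

Lemma bf_frame a b : bf C (vec a) (vec b) = c * embF2 (qm (a + b) + qm a + qm b).
Proof.
rewrite !rmorphD /= !mulrDr -!qf_e F2liftD mulmxDl qfD.
set x := qf C (vec a); set y := qf C (vec b); set z := bf C _ _.
have -> : x + y + z + x + y = z + (x + x) + (y + y) by ring.
by rewrite !addrr_pchar2 // !addr0.
Qed.

Lemma frame_vec_neq0 a : a != 0 -> vec a != 0.
Proof.
move=> nz_a; apply: contraNneq nz_a => a0; rewrite -F2lift_eq0.
by apply/eqP/(row_free_inj free_e); rewrite a0 mul0mx.
Qed.

Lemma frame_vec_neq0E a : vec a != 0 -> a != 0.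
Proof. by apply: contraNneq => ->; rewrite /F2lift map_mx0 mul0mx. Qed.

Lemma frame_genmx_inj a b : a != 0 -> <<vec a>>%MS = <<vec b>>%MS -> a = b.
Proof.
move=> nz_a /genmxP/andP[sub_ab _]; apply: F2_sub_rV_eq => //.
by move: sub_ab; rewrite submxMfree // map_submx.
Qed.

Lemma frame_line_vec a b d : d != 0 -> (vec d <= vec a + vec b)%MS ->
  [\/ d = a, d = b | d = a + b].
Proof.
move=> nz_d; rewrite addsmxE -mul_col_mx submxMfree // -map_col_mx map_submx -addsmxE.
case/sub_addsmxP => [[p q] /= dE]; move: nz_d; rewrite dE !mul_mx11.
by case: (F2_cases (p 0 0)) => ->; case: (F2_cases (q 0 0)) => ->;
  rewrite ?scale0r ?scale1r ?addr0 ?add0r ?eqxx //; constructor.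
Qed.

Lemma rank_frame_line a b : a != 0 -> b != 0 -> a != b -> \rank (vec a + vec b)%MS = 2%N.
Proof.
move=> nz_a nz_b neq_ab.
rewrite addsmxE -mul_col_mx mxrankMfree // -map_col_mx mxrank_map.
apply/eqP; rewrite eqn_leq rank_leq_row ltnNge; apply/negP => rank_le1.
have sub_a : (a <= col_mx a b)%MS by rewrite -addsmxE addsmxSl.
have : (col_mx a b <= a)%MS.
  rewrite -(mxrank_leqif_sup sub_a).2 eq_sym; apply/eqP/anti_leq.
  by rewrite (mxrankS sub_a) andbT; apply: leq_trans rank_le1 _; rewrite rank_rV nz_a.
rewrite -addsmxE addsmx_sub => /andP[_ sub_b].
by move: neq_ab; rewrite (F2_sub_rV_eq nz_b sub_b) eqxx.
Qed.

Definition frame_quadric : {set ppoint F} := [set p : ppoint F | [exists a : 'rV['F_2]_m,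
  [&& a != 0, qm a == 0 & val p == <<vec a>>%MS]]].

Definition frame_coord (p : ppoint F) : 'rV['F_2]_m :=
  odflt 0 [pick a | [&& a != 0, qm a == 0 & val p == <<vec a>>%MS]].

Lemma frame_coordP p : p \in frame_quadric ->
  [/\ frame_coord p != 0, qm (frame_coord p) = 0 & val p = <<vec (frame_coord p)>>%MS].
Proof.
rewrite inE => /existsP[a a_ok]; rewrite /frame_coord.
by case: pickP => [b /and3P[-> /eqP -> /eqP ->] | /(_ a)]; rewrite ?a_ok.
Qed.

Lemma frame_quadricP p a : a != 0 -> qm a = 0 -> val p = <<vec a>>%MS -> p \in frame_quadric.
Proof. by move=> nz_a qa pE; rewrite inE; apply/existsP; exists a; rewrite nz_a qa pE !eqxx. Qed.

Lemma frame_coord_eq p a : a != 0 -> val p = <<vec a>>%MS -> p \in frame_quadric ->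
  frame_coord p = a.
Proof. by move=> nz_a pE /frame_coordP[nz_p _ pE']; apply: (frame_genmx_inj nz_p); rewrite -pE' -pE. Qed.

Lemma frame_coord_inj : {in frame_quadric &, injective frame_coord}.
Proof.
move=> p q /frame_coordP[_ _ pE] /frame_coordP[_ _ qE] eq_pq.
by apply: val_inj; rewrite pE qE eq_pq.
Qed.

Lemma frame_quadric_vec a (nz_a : a != 0) : qm a = 0 ->
  ppoint_of (frame_vec_neq0 nz_a) \in frame_quadric.
Proof. by move=> qa; apply: (frame_quadricP nz_a qa). Qed.

Lemma frame_coord_vec a (nz_a : a != 0) : qm a = 0 ->
  frame_coord (ppoint_of (frame_vec_neq0 nz_a)) = a.
Proof. by move=> qa; apply: frame_coord_eq (frame_quadric_vec _ qa). Qed.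

Lemma qm_eq0 a : (qm a == 0) = (qf C (vec a) == 0).
Proof. by rewrite qf_e mulf_eq0 (negPf nz_c) fmorph_eq0. Qed.

Lemma polar_eq0 a b : qm a = 0 -> qm b = 0 -> (bf C (vec a) (vec b) == 0) = (qm (a + b) == 0).
Proof. by move=> qa qb; rewrite bf_frame qa qb !addr0 mulf_eq0 (negPf nz_c) fmorph_eq0. Qed.

Lemma frame_quadric_sub : frame_quadric \subset [set p | qpoint C p].
Proof.
apply/subsetP => p /frame_coordP[_ qa pE].
by rewrite inE /qpoint pE totsing_genmx -qm_eq0 qa.
Qed.

Lemma frame_quadric_F2 : F2_subgeometry frame_quadric.
Proof.
exists (F2pts e); split; first by exists m, e.
apply/subsetP => p /frame_coordP[nz_a _ pE]; rewrite inE; apply/existsP.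
exists (F2lift (frame_coord p)); rewrite F2lift_eq0 nz_a pE eqxx andbT /=.
by apply/forallP => j; rewrite mxE; case: (embF2_01 (frame_coord p 0 j)) => ->; rewrite eqxx ?orbT.
Qed.

Lemma qf_frame_eq0 a : qm a = 0 -> qf C (vec a) = 0.
Proof. by move=> qa; apply/eqP; rewrite -qm_eq0 qa. Qed.

Lemma QS_line_model (T : {set ppoint F}) : QS_line C frame_quadric T -> model_line qm (frame_coord @: T).
Proof.
case=> L [/andP[sing_L /eqP rank_L] [TE card_T]].
have [p [q [pT qT neq_pq]]] := card_gt1P card_T.
move: (pT) (qT); rewrite TE => /setIdP[pS pL] /setIdP[qS qL].
have [nz_a qa pE] := frame_coordP pS; have [nz_b qb qE] := frame_coordP qS.
set a := frame_coord p in nz_a qa pE *; set b := frame_coord q in nz_b qb qE *.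
have neq_ab : a != b by apply: contraNneq neq_pq => ab; apply/eqP/frame_coord_inj.
have aL : (vec a <= L)%MS by rewrite -genmxE -pE.
have bL : (vec b <= L)%MS by rewrite -genmxE -qE.
have qab : qm (a + b) = 0.
  apply/eqP; rewrite -polar_eq0 //.
  have := forallP sing_L (vec a + vec b).
  by rewrite addmx_sub //= qfD !qf_frame_eq0 // !add0r.
have sub_L : (vec a + vec b <= L)%MS by rewrite addsmx_sub aL bL.
have L_sub : (L <= vec a + vec b)%MS.
  by rewrite -(mxrank_leqif_sup sub_L).2 rank_frame_line // rank_L.
exists a, b; do 6!split => //.
apply/setP => v; rewrite !inE; apply/imsetP/idP => [[r /setIdP[rS rL] ->] |].
  have [nz_r _ rE] := frame_coordP rS.
  have : (vec (frame_coord r) <= vec a + vec b)%MS.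
    by apply: submx_trans L_sub; rewrite -genmxE -rE.
  by case/(frame_line_vec nz_r) => ->; rewrite eqxx ?orbT.
rewrite -orbA => /or3P[] /eqP ->.
- by exists p => //; apply/setIdP.
- by exists q => //; apply/setIdP.
have nz_ab := F2_add_neq0 neq_ab.
exists (ppoint_of (frame_vec_neq0 nz_ab)); last by rewrite frame_coord_vec.
apply/setIdP; split; first exact: frame_quadric_vec.
by rewrite /= genmxE F2liftD mulmxDl addmx_sub.
Qed.

Lemma model_QS_line (T : {set ppoint F}) : T \subset frame_quadric -> model_line qm (frame_coord @: T) ->
  QS_line C frame_quadric T.
Proof.
move=> sub_T [a [b [nz_a [nz_b [neq_ab [qa [qb [qab TE]]]]]]]].
have coordT v : v \in [set a; b; a + b] -> exists2 p, p \in T & frame_coord p = v.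
  by rewrite -TE => /imsetP[p pT ->]; exists p.
have /coordT[pa paT paE] : a \in [set a; b; a + b] by rewrite !inE eqxx.
have /coordT[pb pbT pbE] : b \in [set a; b; a + b] by rewrite !inE eqxx orbT.
pose L := (vec a + vec b)%MS.
have sub_L v : v \in [set a; b; a + b] -> (vec v <= L)%MS.
  rewrite !inE -orbA => /or3P[] /eqP ->; rewrite ?addsmxSl ?addsmxSr //.
  by rewrite F2liftD mulmxDl addmx_sub_adds.
exists L; split; [apply/andP; split | split].
- apply/forallP => v; apply/implyP => /sub_addsmxP[[s t] /= ->].
  rewrite !mul_mx11 qfD !qfZ bfZl bfZr !qf_frame_eq0 //.
  by move/eqP: qab; rewrite -polar_eq0 // => /eqP ->; rewrite !mulr0 !addr0.
- by rewrite rank_frame_line.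
- apply/setP => p; rewrite inE; apply/idP/andP => [pT | [pS pL]].
    have pS := subsetP sub_T p pT; have [_ _ pE] := frame_coordP pS.
    have : frame_coord p \in [set a; b; a + b] by rewrite -TE; apply: imset_f.
    by move/sub_L; rewrite -genmxE -pE pS => ->.
  have [nz_d _ pE] := frame_coordP pS.
  have : frame_coord p \in [set a; b; a + b].
    have : (vec (frame_coord p) <= L)%MS by rewrite -genmxE -pE.
    by rewrite !inE; case/(frame_line_vec nz_d) => ->; rewrite eqxx ?orbT.
  by case/coordT => q qT /(frame_coord_inj (subsetP sub_T q qT) pS) <-.
- apply/card_gt1P; exists pa, pb; split => //.
  by apply: contraNneq neq_ab => eq_ab; rewrite -paE -pbE eq_ab.
Qed.

Lemma frame_quadric_iso : iso_to_model C frame_quadric qm.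
Proof.
exists frame_coord; split; first exact: frame_coord_inj.
  apply/setP => a; rewrite inE; apply/imsetP/andP => [[p pS ->] | [nz_a /eqP qa]].
    by have [-> -> _] := frame_coordP pS.
  exists (ppoint_of (frame_vec_neq0 nz_a)); first exact: frame_quadric_vec.
  by rewrite frame_coord_vec.
by move=> T sub_T; split; [apply: QS_line_model | apply: model_QS_line].
Qed.

Lemma frame_qpoint p a : val p = <<vec a>>%MS -> qpoint C p -> p \in frame_quadric.
Proof.
move=> pE; rewrite /qpoint pE totsing_genmx -qm_eq0 => /eqP qa.
exact: frame_quadricP (frame_vec_neq0E (ppoint_rV_neq0 pE)) qa pE.
Qed.

Lemma adj_frame_third p q a b : val p = <<vec a>>%MS -> val q = <<vec b>>%MS -> adj C p q ->
  exists2 r, r \in frame_quadric & val r = <<vec a + vec b>>%MS.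
Proof.
move=> pE qE /andP[neq_pq sing_pq].
have nz_ab : vec a + vec b != 0.
  apply: contraNneq neq_pq => /eqP; rewrite addr_eq0 oppv_pchar2 // => /eqP ab.
  by apply/eqP/val_inj; rewrite pE qE ab.
have vE : vec (a + b) = vec a + vec b by rewrite F2liftD mulmxDl.
have sing_ab : qf C (vec a + vec b) == 0.
  have := forallP sing_pq (vec a + vec b).
  by rewrite pE qE (adds_eqmx (genmxE _) (genmxE _)) addmx_sub_adds.
exists (ppoint_of nz_ab) => //; apply: (@frame_qpoint _ (a + b)); first by rewrite vE.
by rewrite /qpoint /= totsing_genmx.
Qed.

Section CentricConfiguration.
Variables (H0 : 'M[F]_6) (n0 : ppoint F) (k : nat) (x : 'I_k -> 'I_2 -> ppoint F).
Variables (n : 'rV[F]_6) (u : 'I_k -> 'rV[F]_6) (cn : 'rV['F_2]_m) (CU CV : seq 'rV['F_2]_m).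
Hypotheses (k_gt2 : (2 < k)%N) (x_centric : centric C H0 n0 x).
Hypotheses (n0E : val n0 = <<n>>%MS) (H0_perp : forall v, (v <= H0)%MS = (bf C v n == 0)).
Hypothesis xE : forall i, val (x i ord0) = <<u i>>%MS /\ val (x i ord_max) = <<n + u i>>%MS.
Hypotheses (size_CU : size CU = k) (size_CV : size CV = k).
Hypotheses (cnE : vec cn = n) (cuE : forall i : 'I_k, vec (nth 0 CU i) = u i)
  (cvE : forall i : 'I_k, vec (nth 0 CV i) = n + u i).
Hypothesis off_perp : forall a, qm a = 0 -> qm (a + cn) != qm cn -> (a \in CU) || (a \in CV).

Let x0E i : val (x i ord0) = <<vec (nth 0 CU i)>>%MS.
Proof. by rewrite cuE; case: (xE i). Qed.

Let x1E i : val (x i ord_max) = <<vec (nth 0 CV i)>>%MS.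
Proof. by rewrite cvE; case: (xE i). Qed.

Lemma centric_in_frame_quadric i b : x i b \in frame_quadric.
Proof.
have [/= _ x_pt _ _] := x_centric.
have [-> | ->] : b = ord0 \/ b = ord_max by case: b => [[|[|//]] ?]; [left | right]; apply/val_inj.
  exact: frame_qpoint (x0E i) (x_pt _ _).1.
exact: frame_qpoint (x1E i) (x_pt _ _).1.
Qed.

Lemma centric_in_F2_span : in_F2_span n0 frame_quadric.
Proof.
have [/= x_inj _ x_adj _] := x_centric.
pose i0 : 'I_k := Ordinal (ltnW (ltnW k_gt2)).
pose i1 : 'I_k := Ordinal (ltnW k_gt2); pose i2 : 'I_k := Ordinal k_gt2.
have neq_x i j a b : (i != j) || (a != b) -> val (x i a) != val (x j b).
  by move=> neq; apply: contraTneq neq => /val_inj/x_inj[-> ->]; rewrite !eqxx.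
have adj_x i j : i != j -> adj C (x i ord0) (x j ord_max) by move=> neq; rewrite x_adj neq.
have [ne01 ne21 ne20] : [/\ i0 != i1, i2 != i1 & i2 != i0] by [].
apply: (@in_F2_span_quadrangle _ F2 _ _ (vec (nth 0 CU i0)) (vec (nth 0 CV i1))
  (vec (nth 0 CU i2)) (vec (nth 0 CV i0))).
- by rewrite -x0E -x1E neq_x.
- by rewrite -x0E -x1E eq_sym neq_x.
- by rewrite -x0E -x1E neq_x.
- move=> v; rewrite !inE => /or4P[| | | /or4P[]] /eqP ->.
  + by exists (x i0 ord0); rewrite ?centric_in_frame_quadric ?x0E.
  + by exists (x i1 ord_max); rewrite ?centric_in_frame_quadric ?x1E.
  + by exists (x i2 ord0); rewrite ?centric_in_frame_quadric ?x0E.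
  + by exists (x i0 ord_max); rewrite ?centric_in_frame_quadric ?x1E.
  + exact: adj_frame_third (x0E i0) (x1E i1) (adj_x _ _ ne01).
  + rewrite addrC; exact: adj_frame_third (x0E i2) (x1E i1) (adj_x _ _ ne21).
  + exact: adj_frame_third (x0E i2) (x1E i0) (adj_x _ _ ne20).
- by rewrite n0E cuE cvE addrCA addvv_pchar2 // addr0.
Qed.

Lemma centric_off_H0 :
  [set x i a | i : 'I_k, a : 'I_2] = [set p in frame_quadric | ~~ (val p <= H0)%MS].
Proof.
have [/= _ x_pt _ _] := x_centric.
apply/setP => p; apply/imset2P/setIdP => [[i a _ _ ->] | [pS p_off]].
  by split; [apply: centric_in_frame_quadric | apply: (x_pt i a).2].
have [nz_a qa pE] := frame_coordP pS; set a := frame_coord p in nz_a qa pE.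
have : qm (a + cn) != qm cn.
  move: p_off; rewrite pE genmxE H0_perp -cnE bf_frame qa addr0.
  by rewrite mulf_eq0 (negPf nz_c) fmorph_eq0 addr_eq0 oppr_pchar2 ?pchar2_F2.
case/(off_perp qa)/orP => /(nthP 0)[i lt_i aE].
  exists (Ordinal (leq_trans lt_i (eq_leq size_CU))) ord0 => //.
  by apply: val_inj; rewrite pE -aE x0E.
exists (Ordinal (leq_trans lt_i (eq_leq size_CV))) ord_max => //.
by apply: val_inj; rewrite pE -aE x1E.
Qed.

Lemma centric_of_form : of_form C H0 n0 x qm.
Proof.
exists frame_quadric; split; [exact: frame_quadric_sub | exact: frame_quadric_F2 |
  exact: frame_quadric_iso | exact: centric_in_F2_span | exact: centric_off_H0].
Qed.

End CentricConfiguration.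
End FrameSubgeometry.

Section NaturalFrame.
Variables (C : 'M[F]_6) (k : nat) (c : F) (n : 'rV[F]_6) (u : 'I_k -> 'rV[F]_6).
Hypotheses (qf_n : qf C n = c) (qf_u : forall i, qf C (u i) = 0).
Hypotheses (bf_un : forall i, bf C (u i) n = c) (bf_uu : forall i j, i != j -> bf C (u i) (u j) = c).
Hypotheses (nz_c : c != 0) (k_gt2 : (2 < k)%N).

(* natv 0 = n and natv i.+1 = u_i; indices beyond k give the junk value 0. *)
Definition natv (j : nat) : 'rV[F]_6 :=
  if j is j'.+1 then oapp u 0 (insub j' : option 'I_k) else n.

Lemma natvS (i : 'I_k) : natv i.+1 = u i.
Proof. by rewrite /= valK. Qed.

Lemma qf_natv j : (j <= k)%N -> qf C (natv j) = c *+ (j == 0)%N.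
Proof.
case: j => [_ | j lt_j]; first by rewrite qf_n.
by rewrite -[j]/(val (Ordinal lt_j)) natvS qf_u.
Qed.

Lemma bf_natv j l : (j <= k)%N -> (l <= k)%N -> bf C (natv j) (natv l) = c *+ (j != l).
Proof.
move=> le_j le_l; have [<- | neq_jl] := eqVneq j l; first by rewrite bf_alt.
case: j l le_j le_l neq_jl => [|j] [|l] // lt_j lt_l neq_jl.
- by rewrite bfC -[l]/(val (Ordinal lt_l)) natvS bf_un.
- by rewrite -[j]/(val (Ordinal lt_j)) natvS bf_un.
by rewrite -[j]/(val (Ordinal lt_j)) -[l]/(val (Ordinal lt_l)) !natvS bf_uu.
Qed.

Definition nsum (s : seq nat) : 'rV[F]_6 := \sum_(j <- s) natv j.

Fixpoint nquad (s : seq nat) : nat :=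
  if s is j :: s' then (j == 0) + nquad s' + count (predC1 j) s' else 0.

Definition npolar (s t : seq nat) : nat := sumn [seq count (predC1 j) t | j <- s].

Lemma bf_natv_nsum j t : (j <= k)%N -> all (leq^~ k) t ->
  bf C (natv j) (nsum t) = c *+ count (predC1 j) t.
Proof.
move=> le_j; elim: t => [|l t IH] /=; first by rewrite /nsum big_nil bfC bf0l.
case/andP=> le_l /IH {}IH; rewrite /nsum big_cons bfDr IH bf_natv // eq_sym.
by rewrite mulrnDr.
Qed.

Lemma bf_nsum s t : all (leq^~ k) s -> all (leq^~ k) t ->
  bf C (nsum s) (nsum t) = c *+ odd (npolar s t).
Proof.
move=> le_s le_t; rewrite -mulrn_odd ?addrr_pchar2 // /nsum bf_suml /npolar.
elim: s le_s => [|j s IH] /=; first by rewrite big_nil.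
by case/andP=> le_j /IH {}IH; rewrite big_cons IH bf_natv_nsum // mulrnDr.
Qed.

Lemma qf_nsum s : all (leq^~ k) s -> qf C (nsum s) = c *+ odd (nquad s).
Proof.
rewrite -mulrn_odd ?addrr_pchar2 //; elim: s => [|j s IH] /=; first by rewrite /nsum big_nil qf0.
case/andP=> le_j le_s; rewrite /nsum big_cons qfD -/(nsum s) IH // qf_natv //.
by rewrite bf_natv_nsum // !mulrnDr.
Qed.

Lemma nsum_count N s : all (gtn N) s -> nsum s = \sum_(j < N) natv j *+ count_mem (nat_of_ord j) s.
Proof.
elim: s => [|a s IH] /=.
  by rewrite /nsum big_nil big1 // => j _; rewrite mulr0n.
case/andP=> lt_a /IH sE; rewrite /nsum big_cons -/(nsum s) sE.
under [RHS]eq_bigr do rewrite mulrnDr; rewrite big_split /=; congr (_ + _).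
rewrite (bigD1 (Ordinal lt_a)) //= eqxx mulr1n big1 ?addr0 // => j.
by rewrite -val_eqE /= eq_sym => /negPf ->; rewrite mulr0n.
Qed.

Lemma nsum_parity N s t : all (gtn N) s -> all (gtn N) t ->
  all (fun j => odd (count_mem j s) == odd (count_mem j t)) (iota 0 N) -> nsum s = nsum t.
Proof.
move=> lt_s lt_t /allP parity; rewrite (nsum_count lt_s) (nsum_count lt_t).
apply: eq_bigr => j _; rewrite [LHS]mulrn_odd ?addvv_pchar2 // [RHS]mulrn_odd ?addvv_pchar2 //.
by rewrite (eqP (parity j _)) // mem_iota ltn_ord.
Qed.

(* The frame u_0, u_1, n + u_2, n + u_0 + u_1, n + u_0 + u_1 + u_2 + u_3, n + u_0 + u_1 + u_2 + u_4,
   as index lists of natv: its Gram data are those of the model forms, up to the factor c. *)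
Definition frame_idx : seq (seq nat) :=
  [:: [:: 1]; [:: 2]; [:: 0; 3]; [:: 0; 1; 2]; [:: 0; 1; 2; 3; 4]; [:: 0; 1; 2; 3; 5]].

Definition frv j := nsum (nth [::] frame_idx j).

Definition frame m : 'M[F]_(m, 6) := \matrix_(j < m) frv j.

Lemma frame_idx_le j : ((j < 4) || (j <= k))%N -> all (leq^~ k) (nth [::] frame_idx j).
Proof.
have k3 : (3 <= k)%N := k_gt2.
case: j => [|[|[|[|[|[|j]]]]]] //= le_j; rewrite ?nth_nil ?andbT //; lia.
Qed.

Lemma qf_frv j : ((j < 4) || (j <= k))%N -> qf C (frv j) = c *+ odd (nquad (nth [::] frame_idx j)).
Proof. by move=> le_j; rewrite qf_nsum // frame_idx_le. Qed.

Lemma bf_frv j l : ((j < 4) || (j <= k))%N -> ((l < 4) || (l <= k))%N ->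
  bf C (frv j) (frv l) = c *+ odd (npolar (nth [::] frame_idx j) (nth [::] frame_idx l)).
Proof. by move=> le_j le_l; rewrite bf_nsum // frame_idx_le. Qed.

Lemma frame_mul m (b : 'rV[F]_m.+1) :
  b *m frame m.+1 = \sum_(j < m.+1) b ord0 (inord j) *: frv j.
Proof.
rewrite mulmx_sum_row; apply: eq_bigr => j _; rewrite inord_val rowK.
by congr (_ *: _); congr (b _ j); apply/val_inj.
Qed.

Lemma qf_frame_mul m (b : 'rV[F]_m.+1) : qf C (b *m frame m.+1) =
  \sum_(j < m.+1) (b ord0 (inord j) ^+ 2 * qf C (frv j) +
                   \sum_(i < j) b ord0 (inord i) * b ord0 (inord j) * bf C (frv i) (frv j)).
Proof. by rewrite frame_mul (qf_sum _ _ (fun j => b ord0 (inord j)) frv). Qed.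

Lemma bf_frame_mul m (b : 'rV[F]_m.+1) w :
  bf C (b *m frame m.+1) w = \sum_(j < m.+1) b ord0 (inord j) * bf C (frv j) w.
Proof. by rewrite frame_mul bf_suml; apply: eq_bigr => j _; rewrite bfZl. Qed.

Lemma mulIc_eq0 x : x * c = 0 -> x = 0.
Proof. by move/eqP; rewrite mulf_eq0 (negPf nz_c) orbF => /eqP. Qed.

Lemma row_free_frame m :
  (forall b : 'rV[F]_m.+1, b *m frame m.+1 = 0 -> forall j, (j <= m)%N -> b ord0 (inord j) = 0) ->
  row_free (frame m.+1).
Proof.
move=> ker0; rewrite -kermx_eq0; apply/eqP/row_matrixP => i; rewrite row0.
apply/rowP => j; rewrite -[j]inord_val [RHS]mxE; apply: ker0; last by rewrite -ltnS.
by apply/sub_kermxP; apply: row_sub.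
Qed.

Lemma qf_frame4 (b : 'rV[F]_4) : qf C (b *m frame 4) =
  c * (b ord0 (inord 0) * b ord0 (inord 1) + b ord0 (inord 2) * b ord0 (inord 3)).
Proof.
rewrite qf_frame_mul !big_ord_recr !big_ord0 /= !qf_frv ?bf_frv //=.
by rewrite !mulr0n !mulr1n; ring.
Qed.

Lemma frame4_free : row_free (frame 4).
Proof.
apply: row_free_frame => b b0.
have pair l : \sum_(j < 4) b ord0 (inord j) * bf C (frv j) (frv l) = 0.
  by rewrite -bf_frame_mul b0 bf0l.
move: (pair 0%N) (pair 1%N) (pair 2%N) (pair 3%N).
rewrite !big_ord_recr !big_ord0 /= !bf_frv //= !mulr0n !mulr1n !mulr0 !add0r !addr0.
by move=> /mulIc_eq0 b1 /mulIc_eq0 b0' /mulIc_eq0 b3 /mulIc_eq0 b2 [|[|[|[|//]]]].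
Qed.

Lemma qf_frame5 : (3 < k)%N -> forall b : 'rV[F]_5, qf C (b *m frame 5) =
  c * (b ord0 (inord 0) * b ord0 (inord 1) + b ord0 (inord 2) * b ord0 (inord 3)
       + b ord0 (inord 4) ^+ 2).
Proof.
move=> k_gt3 b; rewrite qf_frame_mul !big_ord_recr !big_ord0 /= !qf_frv ?bf_frv //=.
by rewrite !mulr0n !mulr1n; ring.
Qed.

Lemma qf_frame6 : (4 < k)%N -> forall b : 'rV[F]_6, qf C (b *m frame 6) =
  c * (b ord0 (inord 0) * b ord0 (inord 1) + b ord0 (inord 2) * b ord0 (inord 3)
       + b ord0 (inord 4) ^+ 2 + b ord0 (inord 4) * b ord0 (inord 5) + b ord0 (inord 5) ^+ 2).
Proof.
move=> k_gt4 b; have k_gt3 := ltnW k_gt4.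
rewrite qf_frame_mul !big_ord_recr !big_ord0 /= !qf_frv ?bf_frv //=.
by rewrite !mulr0n !mulr1n; ring.
Qed.

Lemma frame5_free : (3 < k)%N -> row_free (frame 5).
Proof.
move=> k_gt3; apply: row_free_frame => b b0.
have pair l : \sum_(j < 5) b ord0 (inord j) * bf C (frv j) (frv l) = 0.
  by rewrite -bf_frame_mul b0 bf0l.
move: (pair 0%N) (pair 1%N) (pair 2%N) (pair 3%N).
rewrite !big_ord_recr !big_ord0 /= !bf_frv //= !mulr0n !mulr1n !mulr0 !add0r !addr0.
move=> /mulIc_eq0 b1 /mulIc_eq0 b0' /mulIc_eq0 b3 /mulIc_eq0 b2.
have : qf C (b *m frame 5) = 0 by rewrite b0 qf0.
rewrite qf_frame5 // b0' b1 b2 b3 !mul0r !add0r mulrC => /mulIc_eq0/eqP.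
by rewrite expf_eq0 /= => /eqP b4 [|[|[|[|[|//]]]]].
Qed.

Lemma frame6_free : (4 < k)%N -> row_free (frame 6).
Proof.
move=> k_gt4; have k_gt3 := ltnW k_gt4; apply: row_free_frame => b b0.
have pair l : \sum_(j < 6) b ord0 (inord j) * bf C (frv j) (frv l) = 0.
  by rewrite -bf_frame_mul b0 bf0l.
move: (pair 0%N) (pair 1%N) (pair 2%N) (pair 3%N) (pair 4%N) (pair 5%N).
rewrite !big_ord_recr !big_ord0 /= !bf_frv //= !mulr0n !mulr1n !mulr0 !add0r !addr0.
move=> /mulIc_eq0 b1 /mulIc_eq0 b0' /mulIc_eq0 b3 /mulIc_eq0 b2 /mulIc_eq0 b5 /mulIc_eq0 b4.
by case=> [|[|[|[|[|[|//]]]]]].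
Qed.

Lemma frame_row_seq m (s : seq 'F_2) : F2lift (row_seq m.+1 s) *m frame m.+1 =
  nsum (flatten [seq nth [::] frame_idx j | j <- iota 0 m.+1 & nth 0 s j == 1]).
Proof.
rewrite frame_mul /nsum big_flatten big_map big_filter big_mkcond.
rewrite -[iota 0 m.+1]/(index_iota 0 m.+1) big_mkord.
apply: eq_bigr => j _; rewrite !mxE inordK //.
by case: (F2_cases (nth 0 s j)) => ->; rewrite ?rmorph0 ?rmorph1 ?scale0r ?scale1r.
Qed.

Lemma natv6 : (5 < k)%N -> qf_nondeg C -> natv 6 = nsum (iota 0 6).
Proof.
move=> k_gt5 nondeg; have k_gt4 := ltnW k_gt5; have k_gt3 := ltnW k_gt4.
have le7 : all (leq^~ k) (iota 0 7) by rewrite /=; lia.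
have sum0 : nsum (iota 0 7) = 0.
  apply: nondeg; last by rewrite qf_nsum.
  move=> y; have : (y <= frame 6)%MS.
    by rewrite submx_full // row_full_unit -row_free_unit frame6_free.
  case/submxP => b ->; rewrite bfC bf_frame_mul !big_ord_recr big_ord0 /=.
  by rewrite /frv !bf_nsum ?frame_idx_le //= !mulr0n !mulr0 !addr0.
move: sum0; rewrite /nsum -[iota 0 7]/(iota 0 6 ++ [:: 6%N]) big_cat big_seq1 /=.
by move/eqP; rewrite addr_eq0 oppv_pchar2 // => /eqP.
Qed.

Lemma row_seq_eta m (a : 'rV['F_2]_m.+1) :
  a = row_seq m.+1 [seq a ord0 (inord j) | j <- iota 0 m.+1].
Proof.
apply/rowP => j; rewrite mxE (nth_map 0%N) ?size_iota // nth_iota // add0n inord_val.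
by congr (a _ j); apply/val_inj.
Qed.

(* Frame coordinates of n (cn), of the u_i (cu) and of the n + u_i (cv). *)
Definition hexagon_cn : 'rV['F_2]_4 := row_seq 4 [:: 1; 1; 0; 1].
Definition hexagon_cu : seq 'rV['F_2]_4 :=
  [:: row_seq 4 [:: 1; 0; 0; 0]; row_seq 4 [:: 0; 1; 0; 0]; row_seq 4 [:: 1; 1; 1; 1]].
Definition hexagon_cv : seq 'rV['F_2]_4 :=
  [:: row_seq 4 [:: 0; 1; 0; 1]; row_seq 4 [:: 1; 0; 0; 1]; row_seq 4 [:: 0; 0; 1; 0]].

Lemma hexagon_off_perp a : qplus3 a = 0 -> qplus3 (a + hexagon_cn) != qplus3 hexagon_cn ->
  (a \in hexagon_cu) || (a \in hexagon_cv).
Proof.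
move=> /eqP q0 q1; rewrite (row_seq_eta a) /=; move: q0 q1.
rewrite /qplus3 !mxE !inordK //=.
case: (F2_cases (a ord0 (inord 0))) => ->; case: (F2_cases (a ord0 (inord 1))) => ->;
case: (F2_cases (a ord0 (inord 2))) => ->; case: (F2_cases (a ord0 (inord 3))) => ->.
all: by rewrite ?inE ?eqxx ?orbT.
Qed.

Definition cube_cn : 'rV['F_2]_5 := row_seq 5 [:: 1; 1; 0; 1; 0].
Definition cube_cu : seq 'rV['F_2]_5 :=
  [:: row_seq 5 [:: 1; 0; 0; 0; 0]; row_seq 5 [:: 0; 1; 0; 0; 0];
      row_seq 5 [:: 1; 1; 1; 1; 0]; row_seq 5 [:: 1; 1; 1; 0; 1]].
Definition cube_cv : seq 'rV['F_2]_5 :=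
  [:: row_seq 5 [:: 0; 1; 0; 1; 0]; row_seq 5 [:: 1; 0; 0; 1; 0];
      row_seq 5 [:: 0; 0; 1; 0; 0]; row_seq 5 [:: 0; 0; 1; 1; 1]].

Lemma cube_off_perp a : qpar4 a = 0 -> qpar4 (a + cube_cn) != qpar4 cube_cn ->
  (a \in cube_cu) || (a \in cube_cv).
Proof.
move=> /eqP q0 q1; rewrite (row_seq_eta a) /=; move: q0 q1.
rewrite /qpar4 !mxE !inordK //=.
case: (F2_cases (a ord0 (inord 0))) => ->; case: (F2_cases (a ord0 (inord 1))) => ->;
case: (F2_cases (a ord0 (inord 2))) => ->; case: (F2_cases (a ord0 (inord 3))) => ->;
case: (F2_cases (a ord0 (inord 4))) => ->.
all: by rewrite ?inE ?eqxx ?orbT.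
Qed.

Definition dodecade_cn : 'rV['F_2]_6 := row_seq 6 [:: 1; 1; 0; 1; 0; 0].
Definition dodecade_cu : seq 'rV['F_2]_6 :=
  [:: row_seq 6 [:: 1; 0; 0; 0; 0; 0]; row_seq 6 [:: 0; 1; 0; 0; 0; 0];
      row_seq 6 [:: 1; 1; 1; 1; 0; 0]; row_seq 6 [:: 1; 1; 1; 0; 1; 0];
      row_seq 6 [:: 1; 1; 1; 0; 0; 1]; row_seq 6 [:: 1; 1; 1; 0; 1; 1]].
Definition dodecade_cv : seq 'rV['F_2]_6 :=
  [:: row_seq 6 [:: 0; 1; 0; 1; 0; 0]; row_seq 6 [:: 1; 0; 0; 1; 0; 0];
      row_seq 6 [:: 0; 0; 1; 0; 0; 0]; row_seq 6 [:: 0; 0; 1; 1; 1; 0];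
      row_seq 6 [:: 0; 0; 1; 1; 0; 1]; row_seq 6 [:: 0; 0; 1; 1; 1; 1]].

Lemma dodecade_off_perp a : qminus5 a = 0 -> qminus5 (a + dodecade_cn) != qminus5 dodecade_cn ->
  (a \in dodecade_cu) || (a \in dodecade_cv).
Proof.
move=> /eqP q0 q1; rewrite (row_seq_eta a) /=; move: q0 q1.
rewrite /qminus5 !mxE !inordK //=.
case: (F2_cases (a ord0 (inord 0))) => ->; case: (F2_cases (a ord0 (inord 1))) => ->;
case: (F2_cases (a ord0 (inord 2))) => ->; case: (F2_cases (a ord0 (inord 3))) => ->;
case: (F2_cases (a ord0 (inord 4))) => ->; case: (F2_cases (a ord0 (inord 5))) => ->.
all: by rewrite ?inE ?eqxx ?orbT.
Qed.

Definition frame_support m (s : seq 'F_2) : seq nat :=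
  flatten [seq nth [::] frame_idx j | j <- iota 0 m & nth 0 s j == 1].

Lemma frame_row_seq_nsum m (s : seq 'F_2) t :
  all (gtn 7) (frame_support m.+1 s ++ t) &&
  all (fun j => odd (count_mem j (frame_support m.+1 s)) == odd (count_mem j t)) (iota 0 7) ->
  F2lift (row_seq m.+1 s) *m frame m.+1 = nsum t.
Proof.
case/andP; rewrite all_cat => /andP[lt_s lt_t] parity.
by rewrite frame_row_seq; apply: nsum_parity parity.
Qed.

Lemma nsum_seq1 j : nsum [:: j] = natv j.
Proof. exact: big_seq1. Qed.

Lemma nsum_cons j s : nsum (j :: s) = natv j + nsum s.
Proof. exact: big_cons. Qed.

Variables (H0 : 'M[F]_6) (n0 : ppoint F) (x : 'I_k -> 'I_2 -> ppoint F).
Hypotheses (x_centric : centric C H0 n0 x) (n0E : val n0 = <<n>>%MS).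
Hypothesis H0_perp : forall v, (v <= H0)%MS = (bf C v n == 0).
Hypothesis xE : forall i, val (x i ord0) = <<u i>>%MS /\ val (x i ord_max) = <<n + u i>>%MS.

Lemma hexagon_of_form : k = 3%N -> of_form C H0 n0 x qplus3.
Proof.
move=> k3; apply: (centric_of_form (e := frame 4) (cn := hexagon_cn) (CU := hexagon_cu)
  (CV := hexagon_cv) frame4_free nz_c _ k_gt2 x_centric n0E H0_perp xE) => //.
- by move=> a; rewrite qf_frame4 /qplus3 !rmorphD !rmorphM !mxE.
- by rewrite -[n]/(natv 0) -nsum_seq1; apply: frame_row_seq_nsum; vm_compute.
- move=> i; have : (i < 3)%N by rewrite -k3.
  rewrite -natvS -nsum_seq1.
  by case: i => [[|[|[|//]]] lt_i] _; apply: frame_row_seq_nsum; vm_compute.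
- move=> i; have : (i < 3)%N by rewrite -k3.
  rewrite -natvS -nsum_seq1 -[n]/(natv 0) -nsum_cons.
  by case: i => [[|[|[|//]]] lt_i] _; apply: frame_row_seq_nsum; vm_compute.
- exact: hexagon_off_perp.
Qed.

Lemma cube_of_form : k = 4%N -> of_form C H0 n0 x qpar4.
Proof.
move=> k4; have k_gt3 : (3 < k)%N by rewrite k4.
apply: (centric_of_form (e := frame 5) (cn := cube_cn) (CU := cube_cu) (CV := cube_cv)
  (frame5_free k_gt3) nz_c _ k_gt2 x_centric n0E H0_perp xE) => //.
- by move=> a; rewrite qf_frame5 // /qpar4 !rmorphD !rmorphM ?rmorphXn !mxE.
- by rewrite -[n]/(natv 0) -nsum_seq1; apply: frame_row_seq_nsum; vm_compute.
- move=> i; have : (i < 4)%N by rewrite -k4.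
  rewrite -natvS -nsum_seq1.
  by case: i => [[|[|[|[|//]]]] lt_i] _; apply: frame_row_seq_nsum; vm_compute.
- move=> i; have : (i < 4)%N by rewrite -k4.
  rewrite -natvS -nsum_seq1 -[n]/(natv 0) -nsum_cons.
  by case: i => [[|[|[|[|//]]]] lt_i] _; apply: frame_row_seq_nsum; vm_compute.
- exact: cube_off_perp.
Qed.

Lemma dodecade_of_form : qf_nondeg C -> k = 6%N -> of_form C H0 n0 x qminus5.
Proof.
move=> nondeg k6; have k_gt5 : (5 < k)%N by rewrite k6.
have k_gt4 := ltnW k_gt5.
apply: (centric_of_form (e := frame 6) (cn := dodecade_cn) (CU := dodecade_cu)
  (CV := dodecade_cv) (frame6_free k_gt4) nz_c _ k_gt2 x_centric n0E H0_perp xE) => //.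
- by move=> a; rewrite qf_frame6 // /qminus5 !rmorphD !rmorphM ?rmorphXn !mxE.
- by rewrite -[n]/(natv 0) -nsum_seq1; apply: frame_row_seq_nsum; vm_compute.
- move=> i; have : (i < 6)%N by rewrite -k6.
  rewrite -natvS.
  case: i => [[|[|[|[|[|[|//]]]]]] lt_i] _; rewrite ?natv6 // -?nsum_seq1;
    by apply: frame_row_seq_nsum; vm_compute.
- move=> i; have : (i < 6)%N by rewrite -k6.
  rewrite -natvS.
  case: i => [[|[|[|[|[|[|//]]]]]] lt_i] _; rewrite ?natv6 // -?nsum_seq1;
    by rewrite -[n]/(natv 0) -nsum_cons; apply: frame_row_seq_nsum; vm_compute.
- exact: dodecade_off_perp.
Qed.

End NaturalFrame.

End Char2Field.

Theorem theorem4 (F : finFieldType) (hchar : 2%N \in [pchar F])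
  (C : 'M[F]_6) (hnd : qf_nondeg C) (hw : witt_index2 C)
  (H0 : 'M[F]_6) (hH0 : \rank H0 = 5%N) (hpar : parabolic_section C H0)
  (n0 : ppoint F) (hn0 : (val n0 == perpmx C H0)%MS) :
  [/\ (forall x : 'I_3 -> 'I_2 -> ppoint F, centric C H0 n0 x -> of_form C H0 n0 x qplus3),
      (forall x : 'I_4 -> 'I_2 -> ppoint F, centric C H0 n0 x -> of_form C H0 n0 x qpar4) &
      (forall x : 'I_6 -> 'I_2 -> ppoint F, centric C H0 n0 x -> of_form C H0 n0 x qminus5)].
Proof.
(* The Witt index of f and the parabolicity of Q_0 are not used by the argument. *)
split=> x x_c; have [c [n [u [[nz_c n0E H0_perp] [[qf_n qf_u bf_un bf_uu] xE]]]]] :=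
  centric_normal_form hchar hH0 hn0 (ltn0Sn _) x_c.
- exact: (hexagon_of_form hchar qf_n qf_u bf_un bf_uu nz_c isT x_c n0E H0_perp xE erefl).
- exact: (cube_of_form hchar qf_n qf_u bf_un bf_uu nz_c isT x_c n0E H0_perp xE erefl).
- exact: (dodecade_of_form hchar qf_n qf_u bf_un bf_uu nz_c isT x_c n0E H0_perp xE hnd erefl).
Qed.
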